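(* Let $r\geq 1$ be an integer and $N\geq 1$. Then $$ \sum_{a\leq N^r}(\tau_r'(a))^2\leq\left(\sum_{a\leq N}\tau_r(a)\right)^r. $$
   Context: $a$ runs over positive integers. $\tau_r(a)$ is the number of ways to write $a$ as an ordered product of $r$ positive integers, and $\tau_r'(a)$ is the number of ways to write $a$ as an ordered product of $r$ positive integers each of which does not exceed $N$. *)

From mathcomp Require Import all_boot.
Set Implicit Arguments. Unset Strict Implicit. Unset Printing Implicit Defensive.

(* tau r a : number of ordered r-tuples (x_1,...,x_r) of positive integers
   with x_1 * ... * x_r = a.  For a >= 1 every such factor is <= a, so it
   suffices to range over entries in {0,...,a}. *)
Definition tau (r a : nat) : nat :=
  #|[set t : {ffun 'I_r -> 'I_a.+1} |
      [forall i, 0 < t i] && (\prod_(i < r) (t i : nat) == a)]|.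

Definition tau' (N r a : nat) : nat :=
  #|[set t : {ffun 'I_r -> 'I_N.+1} |
      [forall i, 0 < t i] && (\prod_(i < r) (t i : nat) == a)]|.

From mathcomp Require Import all_boot.
Set Implicit Arguments. Unset Strict Implicit. Unset Printing Implicit Defensive.

(* The square of tau' N r a counts pairs (u, v) of r-tuples with entries in
   [1, N] and common product a, so the left-hand side counts pairs of such
   tuples with equal products.  Every such pair is the pair of row products
   and column products of an r x r matrix of positive integers (split u_i
   along its gcds with the v_j), and each row of that matrix has product
   u_i <= N.  Hence there are at most as many pairs as r-tuples of rows with
   product <= N, and the number of rows with product <= N is
   \sum_(a <= N) tau' N r a <= \sum_(a <= N) tau r a. *)
Lemma card_partition_nat (T : finType) (P : pred T) (f : T -> nat) (B : nat) :
  (forall u, P u -> f u <= B) ->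
  #|[set u | P u]| = \sum_(a < B.+1) #|[set u | P u && (f u == a)]|.
Proof.
move=> fB; rewrite -sum1_card.
rewrite (partition_big (fun u => inord (f u) : 'I_B.+1) predT) //=.
apply: eq_bigr => a _; rewrite -sum1_card; apply: eq_bigl => u.
rewrite !inE; case Pu: (P u) => //=.
by rewrite -(inj_eq val_inj) /= inordK // ltnS fB.
Qed.

Lemma dvdn_prod_split q (t : nat -> nat) d : 0 < d ->
  d %| \prod_(j < q) t j ->
  exists e : nat -> nat, [/\ forall j, 0 < e j, forall j, e j %| t j &
                            \prod_(j < q) e j = d].
Proof.
elim: q d => [|q IH] d d_gt0.
  rewrite big_ord0 dvdn1 => /eqP ->.
  by exists (fun _ => 1); split => //; rewrite big_ord0.
rewrite big_ord_recr /= => d_dvd.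
set g := gcdn d (t q).
have g_gt0 : 0 < g by rewrite gcdn_gt0 d_gt0.
have dE : d = d %/ g * g by rewrite divnK // dvdn_gcdl.
have tE : t q = t q %/ g * g by rewrite divnK // dvdn_gcdr.
have cop : coprime (d %/ g) (t q %/ g).
  by rewrite /coprime -(eqn_pmul2r g_gt0) mul1n muln_gcdl -dE -tE.
have d'_dvd : d %/ g %| \prod_(j < q) t j.
  by move: d_dvd; rewrite {1}dE {1}tE mulnA dvdn_pmul2r // Gauss_dvdl.
have d'_gt0 : 0 < d %/ g by rewrite divn_gt0 // dvdn_leq // dvdn_gcdl.
have [e [e_gt0 e_dvd e_prod]] := IH _ d'_gt0 d'_dvd.
exists (fun j => if j == q then g else e j); split.
- by move=> j; case: eqP.
- by move=> j; case: eqP => [->|_]; rewrite ?dvdn_gcdr.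
rewrite big_ord_recr /= eqxx [in RHS]dE -e_prod; congr (_ * _).
by apply: eq_bigr => i _; rewrite ltn_eqF.
Qed.

Lemma eq_prod_factor_matrix p q (s t : nat -> nat) : (forall i, 0 < s i) ->
  \prod_(i < p) s i = \prod_(j < q) t j ->
  exists m : nat -> nat -> nat, [/\ forall i j, 0 < m i j,
     forall i, i < p -> \prod_(j < q) m i j = s i &
     forall j, j < q -> \prod_(i < p) m i j = t j].
Proof.
elim: p s t => [|p IH] s t s_gt0.
  rewrite big_ord0 => prodE; exists (fun _ _ => 1); split => // j lt_jq.
  rewrite big_ord0; apply/esym/eqP; rewrite -dvdn1 prodE.
  by rewrite (bigD1 (Ordinal lt_jq)) //= dvdn_mulr.
rewrite big_ord_recl /= => prodE.
have s0_dvd : s 0 %| \prod_(j < q) t j by rewrite -prodE dvdn_mulr.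
have [e [e_gt0 e_dvd e_prod]] := dvdn_prod_split (s_gt0 0) s0_dvd.
have prodE' : \prod_(i < p) s i.+1 = \prod_(j < q) (t j %/ e j).
  apply/eqP; rewrite -(eqn_pmul2l (s_gt0 0)) prodE -{1}e_prod -big_split /=.
  by apply/eqP/eq_bigr => j _; rewrite mulnC divnK.
have [m [m_gt0 m_row m_col]] :=
  IH (fun i => s i.+1) (fun j => t j %/ e j) (fun i => s_gt0 _) prodE'.
exists (fun i j => if i is i'.+1 then m i' j else e j); split.
- by move=> [|i] j.
- by move=> [|i] lt_ip //=; apply: m_row.
by move=> j lt_jq; rewrite big_ord_recl /= m_col // mulnC divnK.
Qed.

Section BoundedTuples.

Variables r N : nat.

Definition tprod (u : {ffun 'I_r -> 'I_N.+1}) : nat := \prod_(i < r) (u i : nat).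

Definition tpos (u : {ffun 'I_r -> 'I_N.+1}) : bool := [forall i, 0 < u i].

Lemma tprod_gt0 u : tpos u -> 0 < tprod u.
Proof. by move=> /forallP u_gt0; apply: prodn_gt0. Qed.

Lemma leq_tprod u i : tpos u -> u i <= tprod u.
Proof.
move=> u_gt0; apply: dvdn_leq; first exact: tprod_gt0.
by rewrite /tprod (bigD1 i) //= dvdn_mulr.
Qed.

Lemma tprod_leq_exp u : tprod u <= N ^ r.
Proof.
rewrite -(card_ord r) -prod_nat_const; apply: leq_prod => i _.
by rewrite -ltnS.
Qed.

Lemma tau'0 : tau' N r 0 = 0.
Proof.
apply/eqP; rewrite cards_eq0; apply/eqP/setP => u; rewrite !inE.
by apply/negbTE/andP => -[/tprod_gt0 + /eqP u0]; rewrite /tprod u0.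
Qed.

Lemma tau'_le_tau a : tau' N r a <= tau r a.
Proof.
have [->|a_gt0] := posnP a; first by rewrite tau'0.
pose shrink (u : {ffun 'I_r -> 'I_N.+1}) := [ffun i => (inord (u i) : 'I_a.+1)].
rewrite /tau'; set S := [set u | _].
have shrinkE u i : u \in S -> (shrink u i : nat) = u i.
  rewrite inE => /andP [u_gt0 /eqP uE].
  by rewrite ffunE inordK // ltnS -uE leq_tprod.
rewrite -(card_in_imset (f := shrink)).
  apply: subset_leq_card; apply/subsetP => _ /imsetP [u uS ->].
  have := uS; rewrite [u \in S]inE => /andP [/forallP u_gt0 /eqP uE].
  rewrite inE; apply/andP; split.
    by apply/forallP => i; rewrite shrinkE ?u_gt0.
  by apply/eqP; rewrite -[RHS]uE; apply: eq_bigr => i _; rewrite shrinkE.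
move=> u v uS vS /ffunP uv; apply/ffunP => i; apply: val_inj.
by move: (congr1 val (uv i)); rewrite /= !shrinkE.
Qed.

Definition eq_prod_pairs :=
  [set x : {ffun 'I_r -> 'I_N.+1} * {ffun 'I_r -> 'I_N.+1} |
     [&& tpos x.1, tpos x.2 & tprod x.1 == tprod x.2]].

Definition small_tuples :=
  [set u : {ffun 'I_r -> 'I_N.+1} | tpos u && (tprod u <= N)].

Lemma tau'E a : tau' N r a = #|[set u | tpos u && (tprod u == a)]|.
Proof. by []. Qed.

Lemma sum_tau'_sqr : \sum_(a < (N ^ r).+1) tau' N r a ^ 2 = #|eq_prod_pairs|.
Proof.
rewrite (card_partition_nat (f := fun x => tprod x.1) (B := N ^ r)); last first.
  by move=> x _; apply: tprod_leq_exp.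
apply: eq_bigr => a _; rewrite tau'E expnS expn1 -cardsX; apply: eq_card => -[u v].
rewrite !inE /=; case: (tpos u) (tpos v) => [] [] //=; rewrite ?andbF //.
by case: (tprod u =P a) => [->|_]; rewrite ?andbT ?andbF // eq_sym.
Qed.

Lemma card_small_tuples : #|small_tuples| = \sum_(a < N.+1) tau' N r a.
Proof.
rewrite (card_partition_nat (f := tprod) (B := N)); last by move=> u /andP [].
apply: eq_bigr => a _; rewrite tau'E; apply: eq_card => u; rewrite !inE -andbA.
by case: (tprod u =P a) => [->|_]; rewrite ?andbF // -ltnS ltn_ord andbT.
Qed.

Definition tfun (u : {ffun 'I_r -> 'I_N.+1}) (k : nat) : nat :=
  if insub k is Some i then u i else 1.

Lemma tfunE u (i : 'I_r) : tfun u i = u i.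
Proof. by rewrite /tfun valK. Qed.

Lemma tfun_gt0 u k : tpos u -> 0 < tfun u k.
Proof. by move=> /forallP u_gt0; rewrite /tfun; case: insub. Qed.

Lemma prod_tfun u : \prod_(i < r) tfun u i = tprod u.
Proof. by apply: eq_bigr => i _; rewrite tfunE. Qed.

Definition row_col_prods (M : {ffun 'I_r -> {ffun 'I_r -> 'I_N.+1}}) :=
  ([ffun i => inord (\prod_(j < r) (M i j : nat)) : 'I_N.+1],
   [ffun j => inord (\prod_(i < r) (M i j : nat)) : 'I_N.+1]).

Lemma eq_prod_pairs_sub :
  eq_prod_pairs \subset row_col_prods @: ffun_on small_tuples.
Proof.
apply/subsetP => -[u v]; rewrite inE /= => /and3P [u_gt0 v_gt0 /eqP uvE].
have prodE : \prod_(i < r) tfun u i = \prod_(j < r) tfun v j.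
  by rewrite !prod_tfun.
have [m [m_gt0 m_row m_col]] :=
  eq_prod_factor_matrix (fun i => tfun_gt0 i u_gt0) prodE.
have m_le (i j : 'I_r) : m i j <= N.
  have row_le : \prod_(k < r) m i k <= N by rewrite m_row // tfunE -ltnS.
  apply: leq_trans row_le; apply: dvdn_leq; first exact: prodn_gt0.
  by rewrite (bigD1 j) //= dvdn_mulr.
pose M := [ffun i : 'I_r => [ffun j : 'I_r => (inord (m i j) : 'I_N.+1)]].
have ME i j : (M i j : nat) = m i j by rewrite !ffunE inordK // ltnS.
apply/imsetP; exists M.
  apply/ffun_onP => i; rewrite inE; apply/andP; split.
    by apply/forallP => j; rewrite ME.
  by rewrite /tprod (eq_bigr _ (fun j _ => ME i j)) m_row // tfunE -ltnS.
congr pair; apply/ffunP => i; apply: val_inj; rewrite ffunE /=.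
- by rewrite (eq_bigr _ (fun j _ => ME i j)) m_row // tfunE inordK.
- by rewrite (eq_bigr _ (fun j _ => ME j i)) m_col // tfunE inordK.
Qed.

Lemma card_eq_prod_pairs : #|eq_prod_pairs| <= #|small_tuples| ^ r.
Proof.
have := card_ffun_on 'I_r small_tuples; rewrite card_ord => <-.
apply: leq_trans (leq_imset_card row_col_prods _).
exact/subset_leq_card/eq_prod_pairs_sub.
Qed.

End BoundedTuples.

Theorem lemma2p2 (r N : nat) (hr : 1 <= r) (hN : 1 <= N) :
  \sum_(1 <= a < (N ^ r).+1) (tau' N r a) ^ 2
  <= (\sum_(1 <= a < N.+1) tau r a) ^ r.
Proof.
have drop0 (F : nat -> nat) n :
    F 0 = 0 -> \sum_(1 <= a < n.+1) F a = \sum_(a < n.+1) F a.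
  by move=> F0; rewrite -(big_mkord xpredT) [RHS]big_ltn // F0.
rewrite (drop0 (fun a => tau' N r a ^ 2)) ?tau'0 // sum_tau'_sqr.
apply: leq_trans (card_eq_prod_pairs r N) _.
rewrite leq_exp2r // card_small_tuples -drop0 ?tau'0 //.
by apply: leq_sum => a _; apply: tau'_le_tau.
Qed.
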